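(* Let $n\ge 1$. As polynomials in the indeterminates $x$ and $y$ with coefficients in $\mathbb{Q}[\mathfrak{S}_n]$, \[\rho^{(\ell)}(x)\rho^{(\ell)}(y)=\rho^{(\ell)}(xy),\qquad \rho^{(r)}(x)\rho^{(r)}(y)=\rho^{(\ell)}(xy),\qquad \rho^{(\ell)}(x)\rho^{(r)}(y)=\rho^{(r)}(xy),\qquad \rho^{(r)}(x)\rho^{(\ell)}(y)=\rho^{(r)}(xy),\] where $\rho^{(\ell)}(x)=\sum_{\pi\in\mathfrak{S}_n}\Omega^{(\ell)}(\pi;(x-1)/2)\,\pi$ and $\rho^{(r)}(x)=\sum_{\pi\in\mathfrak{S}_n}\Omega^{(r)}(\pi;(x-1)/2)\,\pi$.
   Context: $\mathfrak{S}_n$ is the symmetric group on $[n]$, permutations are words $(\pi(1),\dots,\pi(n))$, and multiplication in $\mathbb{Q}[\mathfrak{S}_n]$ is composition $(\sigma\tau)(i)=\sigma(\tau(i))$. Let $Z$ be a finite totally ordered set each of whose elements is declared ''plus-type'' or ''minus-type''. For $\pi\in\mathfrak{S}_n$ let $N(\pi;Z)$ be the number of sequences $(a_1,\dots,a_n)\in Z^n$ with $a_1\le\dots\le a_n$ such that for every $s\in[n-1]$: if $\pi(s)<\pi(s+1)$ then $a_s<a_{s+1}$ or ($a_s=a_{s+1}$ is plus-type); if $\pi(s)>\pi(s+1)$ then $a_s<a_{s+1}$ or ($a_s=a_{s+1}$ is minus-type). For a positive integer $k$ define the left enriched order polynomial $\Omega^{(\ell)}(\pi;k)=N(\pi;Z)$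 with $Z=\{0<\bar1<1<\bar2<2<\dots<\bar k<k\}$ and the right enriched order polynomial $\Omega^{(r)}(\pi;k)=N(\pi;Z)$ with $Z=\{\bar1<1<\bar2<2<\dots<\bar k<k<\overline{k+1}\}$, where $0$ and the unbarred $j$ are plus-type and barred elements $\bar j$ are minus-type. As functions of $k$ these are restrictions of unique polynomials with rational coefficients, denoted by the same symbols; these polynomials are evaluated at $(x-1)/2$ above. *)

From HB Require Import structures.
From mathcomp Require Import all_boot all_order all_algebra all_fingroup.
Set Implicit Arguments. Unset Strict Implicit. Unset Printing Implicit Defensive.
Import Order.TTheory GRing.Theory Num.Theory.
Local Open Scope ring_scope.

(* Z is encoded as the ordinal type 'I_m (its total order is the order of  *)
(* positions), and [plus p] says whether the element at position p is      *)
(* plus-type.  Positions in [n] are 0-based: position s of the paper is    *)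
(* the ordinal s-1.                                                         *)
Definition Ncount (n m : nat) (plus : nat -> bool) (pi : 'S_n) : nat :=
  #|[set a : {ffun 'I_n -> 'I_m} |
     [forall i : 'I_n, forall j : 'I_n, (nat_of_ord j == i.+1) ==>
        [&& (a i <= a j)%N &
         if (pi i < pi j)%N
         then (a i < a j)%N || ((a i == a j) && plus (a i))
         else (a i < a j)%N || ((a i == a j) && ~~ plus (a i))]]]|.

(* Left: Z = {0 < 1bar < 1 < ... < kbar < k}; position 0 is 0, position    *)
(* 2j-1 is jbar (minus-type), position 2j is j (plus-type).                 *)
Definition Omega_left_count (n : nat) (pi : 'S_n) (k : nat) : nat :=
  Ncount (2 * k).+1 (fun p => ~~ odd p) pi.

(* Right: Z = {1bar < 1 < ... < kbar < k < (k+1)bar}; position 2j-2 is    *)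
(* jbar (minus), position 2j-1 is j (plus), position 2k is (k+1)bar.        *)
Definition Omega_right_count (n : nat) (pi : 'S_n) (k : nat) : nat :=
  Ncount (2 * k).+1 (fun p => odd p) pi.

(* {poly {poly rat}}: the inner variable is x, the outer one is y.          *)
Definition varX : {poly {poly rat}} := ('X)%:P.
Definition varY : {poly {poly rat}} := 'X.

Definition peval (p : {poly rat}) (u : {poly {poly rat}}) : {poly {poly rat}} :=
  (map_poly (fun c : rat => c%:P%:P) p).[u].

Definition half_shift (u : {poly {poly rat}}) : {poly {poly rat}} :=
  (u - 1) * ((2%:R : rat)^-1)%:P%:P.

(* An element sum_pi c_pi pi is represented by its coefficient function.   *)
(* Product uses the paper's composition (sigma tau)(i) = sigma(tau(i)),     *)
(* which is (tau * sigma)%g in mathcomp (since (s * t) i = t (s i)).        *)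
Definition galg_mul (n : nat) (a b : 'S_n -> {poly {poly rat}}) (sigma : 'S_n)
  : {poly {poly rat}} :=
  \sum_(pi : 'S_n) \sum_(tau : 'S_n | (tau * pi)%g == sigma) a pi * b tau.

Definition rho (n : nat) (P : 'S_n -> {poly rat}) (u : {poly {poly rat}})
  : 'S_n -> {poly {poly rat}} :=
  fun pi => peval (P pi) (half_shift u).

From HB Require Import structures.
From mathcomp Require Import all_boot all_order all_algebra all_fingroup.
From mathcomp Require Import zify.
Import GRing.Theory.
Set Implicit Arguments. Unset Strict Implicit. Unset Printing Implicit Defensive.

(* Ncount m plus pi counts the words w : [n] -> Z, |Z| = m, whose
   standardization is pi^-1: positions are ranked by value, ties being broken
   increasingly at plus-type values and decreasingly at minus-type ones.
   A word over Z together with a word over W read along the standardization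
   of the first is the same as one word over W x Z, ordered lexicographically
   with Z reversed inside the minus-type blocks of W and typed by the product
   of the signs; its standardization is the product of the two
   standardizations, so the counts over Z and W convolve in Q[S_n] into the
   counts over W x Z.  The chains defining Omega^(l) and Omega^(r) for k have
   2k + 1 elements with types alternating by parity, and so does the product
   of two of them, of size (2k+1)(2l+1) = 2(2kl+k+l)+1.  Hence the identities
   hold at x = 2k + 1, y = 2l + 1 for all k, l > 0, and therefore as
   polynomials. *)

Local Open Scope nat_scope.

Section SignedLex.
Variable plus : nat -> bool.

Definition slex_lt (a x b y : nat) : bool :=
  (a < b) || (a == b) && (if plus a then x < y else y < x).

Lemma slex_lt_irr a x : slex_lt a x a x = false.
Proof. by rewrite /slex_lt ltnn eqxx; case: (plus a); rewrite ltnn. Qed.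

Lemma slex_lt_trans a x b y c z :
  slex_lt a x b y -> slex_lt b y c z -> slex_lt a x c z.
Proof.
rewrite /slex_lt => /orP[ab|/andP[/eqP<- xy]] /orP[bc|/andP[/eqP<- yz]].
- by rewrite (ltn_trans ab bc).
- by rewrite ab.
- by rewrite bc.
- by rewrite ltnn eqxx /=; case: (plus a) xy yz; lia.
Qed.

Lemma slex_lt_total a x b y : x != y -> slex_lt a x b y || slex_lt b y a x.
Proof.
rewrite /slex_lt => neq_xy; case: (ltngtP a b) => //= <-.
by case: (plus a); lia.
Qed.

Lemma slex_ltE a b x y : x != y ->
  [&& a <= b & if x < y then (a < b) || (a == b) && plus a
               else (a < b) || (a == b) && ~~ plus a] = slex_lt a x b y.
Proof.
rewrite /slex_lt => neq_xy; case: (ltngtP a b) => [ab|ba|_] /=.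
- by case: ifP.
- by [].
- by case: (plus a); case: (ltngtP x y) neq_xy.
Qed.

End SignedLex.

Lemma card_ord_lt n c : c <= n -> #|[set z : 'I_n | z < c]| = c.
Proof.
move=> le_cn; rewrite cardsE -sum1_card (big_ord_narrow le_cn).
by rewrite sum1_card card_ord.
Qed.

Lemma card_perm_lt n (s : 'S_n) y : #|[set x | s x < s y]| = s y.
Proof.
have -> : [set x | s x < s y] = s @^-1: [set z : 'I_n | z < s y].
  by apply/setP => x; rewrite !inE.
by rewrite card_preimset ?card_ord_lt 1?ltnW //; apply: perm_inj.
Qed.

Lemma perm_lt_inj n (s t : 'S_n) :
  (forall x y, (s x < s y) = (t x < t y)) -> s = t.
Proof.
move=> st; apply/permP => y; apply: ord_inj.
by rewrite -card_perm_lt -[RHS]card_perm_lt; apply: eq_card => x; rewrite !inE st.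
Qed.

Lemma perm_eq1_consec n (s : 'S_n) :
  (s == 1%g) = [forall i : 'I_n, forall j : 'I_n, (nat_of_ord j == i.+1) ==> (s i < s j)].
Proof.
apply/eqP/forallP => [-> i|incr].
  by apply/forallP => j; apply/implyP => /eqP ji; rewrite !perm1 ji.
have mono d (i j : 'I_n) : j = i + d.+1 :> nat -> s i < s j.
  elim: d j => [|d IH] j ji.
    by move/forallP: (incr i) => /(_ j)/implyP; apply; rewrite ji addn1.
  have lt_k : i + d.+1 < n by have := ltn_ord j; lia.
  apply: ltn_trans (IH (Ordinal lt_k) erefl) _.
  by move/forallP: (incr (Ordinal lt_k)) => /(_ j)/implyP; apply; rewrite ji addnS.
apply: perm_lt_inj => x y; rewrite !perm1.
case: (ltngtP x y) => [xy|yx|/val_inj->]; last by rewrite ltnn.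
- by apply: (mono (y - x.+1)); lia.
- by apply/negbTE; rewrite -leqNgt ltnW // (mono (x - y.+1)) //; lia.
Qed.

Section RankPerm.
Variables (n : nat) (r : rel 'I_n).
Hypotheses (r_irr : irreflexive r) (r_trans : transitive r)
  (r_total : forall x y, x != y -> r x y || r y x).

Definition rank y := #|[set x | r x y]|.

Lemma rank_lt y : rank y < n.
Proof.
rewrite -[n]card_ord -cardsT; apply: proper_card; apply/properP.
by split; [apply/subsetP => x | exists y]; rewrite !inE ?r_irr.
Qed.

Lemma rank_mono x y : r x y -> rank x < rank y.
Proof.
move=> rxy; apply: proper_card; apply/properP; split.
  by apply/subsetP => z; rewrite !inE => /r_trans; apply.
by exists x; rewrite !inE ?r_irr.
Qed.

Lemma rank_ltE x y : (rank x < rank y) = r x y.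
Proof.
apply/idP/idP => [lt_xy|]; last exact: rank_mono.
have neq_xy : x != y by apply: contraTneq lt_xy => ->; rewrite ltnn.
by case/orP: (r_total neq_xy) => // /rank_mono; rewrite ltnNge ltnW.
Qed.

Lemma rank_inj : injective (fun y => Ordinal (rank_lt y)).
Proof.
move=> x y /(congr1 val) /= eq_xy; apply/eqP; apply: contraT => /r_total.
by case/orP; rewrite -rank_ltE eq_xy ltnn.
Qed.

Definition rank_perm : 'S_n := perm rank_inj.

Lemma rank_permE x y : (rank_perm x < rank_perm y) = r x y.
Proof. by rewrite !permE rank_ltE. Qed.

End RankPerm.

Section Standardization.
Variables (n m : nat) (plus : nat -> bool).
Implicit Type w : {ffun 'I_n -> 'I_m}.

Definition word_lt w : rel 'I_n := fun x y => slex_lt plus (w x) x (w y) y.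

Lemma word_lt_irr w : irreflexive (word_lt w).
Proof. by move=> x; rewrite /word_lt slex_lt_irr. Qed.

Lemma word_lt_trans w : transitive (word_lt w).
Proof. by move=> y x z; apply: slex_lt_trans. Qed.

Lemma word_lt_total w x y : x != y -> word_lt w x y || word_lt w y x.
Proof. by move=> neq_xy; apply: slex_lt_total. Qed.

Definition std w : 'S_n :=
  rank_perm (@word_lt_irr w) (@word_lt_trans w) (@word_lt_total w).

Lemma std_ltE w x y : (std w x < std w y) = word_lt w x y.
Proof. exact: rank_permE. Qed.

Lemma std_eq w (s : 'S_n) : (forall x y, word_lt w x y = (s x < s y)) -> std w = s.
Proof. by move=> ws; apply: perm_lt_inj => x y; rewrite std_ltE ws. Qed.

Lemma Ncount_std (pi : 'S_n) :
  Ncount m plus pi = #|[set w : {ffun 'I_n -> 'I_m} | std w == (pi^-1)%g]|.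
Proof.
pose g (a : {ffun 'I_n -> 'I_m}) := [ffun x => a ((pi^-1)%g x)].
have g_inj : injective g.
  move=> a b /ffunP eq_ab; apply/ffunP => i.
  by have := eq_ab (pi i); rewrite !ffunE permK.
rewrite -(card_preimset _ g_inj); apply: eq_card => a.
rewrite !inE eq_sym eq_invg_mul perm_eq1_consec.
apply: eq_forallb => i; apply: eq_forallb => j; case: eqP => //= ji.
have neq_ij : (pi i : nat) != pi j.
  by rewrite (inj_eq val_inj) (inj_eq perm_inj) -(inj_eq val_inj) /= ji ltn_eqF.
by rewrite !permM std_ltE /word_lt !ffunE !permK; apply: slex_ltE.
Qed.

End Standardization.

Lemma card_mul_fibers (gT : finGroupType) (A B : finType) (f : A -> gT) (g : B -> gT) c :
  #|[set p : A * B | (f p.1 * g p.2 == c)%g]|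
  = \sum_(x : gT) \sum_(y | (x * y == c)%g)
      #|[set a | f a == x]| * #|[set b | g b == y]|.
Proof.
rewrite -sum1_card (partition_big (fun p => f p.1) predT) //=.
apply: eq_bigr => x _; rewrite (big_pred1 (x^-1 * c)%g); last first.
  by move=> y; rewrite /= (canF_eq (mulKg x)).
rewrite -cardsX sum1dep_card; apply: eq_card => -[a b]; rewrite !inE /=.
by rewrite andbC; case: eqP => //= ->; rewrite (canF_eq (mulKg x)).
Qed.

Lemma lex_ltn d q q' r r' : r < d -> r' < d ->
  (q * d + r < q' * d + r') = (q < q') || (q == q') && (r < r').
Proof.
move=> lt_rd lt_r'd; case: (ltngtP q q') => [lt_qq'|lt_q'q|<-] /=.
- have : q.+1 * d <= q' * d by rewrite leq_mul2r lt_qq' orbT.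
  by rewrite mulSn; move: (q * d) (q' * d) => qd q'd; lia.
- have : q'.+1 * d <= q * d by rewrite leq_mul2r lt_q'q orbT.
  by rewrite mulSn; move: (q * d) (q' * d) => qd q'd; lia.
- by rewrite ltn_add2l.
Qed.

Lemma lex_eqn d q q' r r' : r < d -> r' < d ->
  (q * d + r == q' * d + r') = (q == q') && (r == r').
Proof.
move=> lt_rd lt_r'd.
rewrite eqn_leq (leqNgt (q * d + r)) (leqNgt (q' * d + r')) !lex_ltn //.
by case: (ltngtP q q'); case: (ltngtP r r').
Qed.

Section Product.
Variables (n mZ mW : nat) (pZ pW : nat -> bool).

Definition prod_pos (b : 'I_mW) (a : 'I_mZ) : nat :=
  b * mZ + (if pW b then a else rev_ord a).

Definition prod_plus (p : nat) : bool :=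
  if pW (p %/ mZ) then pZ (p %% mZ) else ~~ pZ (mZ - (p %% mZ).+1).

Lemma prod_pos_lt b a : prod_pos b a < mW * mZ.
Proof.
have : b.+1 * mZ <= mW * mZ by rewrite leq_mul2r ltn_ord orbT.
by have := ltn_ord (if pW b then a else rev_ord a); rewrite /prod_pos mulSn; lia.
Qed.

Lemma prod_pos_ltE b a b' a' :
  (prod_pos b a < prod_pos b' a') = slex_lt pW b a b' a'.
Proof.
rewrite /prod_pos /slex_lt lex_ltn ?ltn_ord //.
by case: eqP => //= <-; have := ltn_ord a; have := ltn_ord a'; case: (pW b) => /=; lia.
Qed.

Lemma prod_pos_eqE b a b' a' :
  (prod_pos b a == prod_pos b' a') = (b == b' :> nat) && (a == a' :> nat).
Proof.
rewrite /prod_pos lex_eqn ?ltn_ord //.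
by case: eqP => //= <-; have := ltn_ord a; have := ltn_ord a'; case: (pW b) => /=; lia.
Qed.

Lemma prod_plus_pos b a : prod_plus (prod_pos b a) = (pW b == pZ a).
Proof.
have mZ_gt0 : 0 < mZ by apply: leq_ltn_trans (ltn_ord a).
rewrite /prod_plus /prod_pos divnMDl // modnMDl.
rewrite divn_small ?modn_small ?ltn_ord // addn0.
by case: (pW b) => //=; have -> : mZ - (mZ - a.+1).+1 = a by have := ltn_ord a; lia.
Qed.

(* The twisted lexicographic product is associative: both sides compare the
   positions x and y in (W x Z) x [n] = W x (Z x [n]). *)
Lemma slex_prod (b b' : 'I_mW) (a a' : 'I_mZ) (x y sx sy : nat) :
  (sx < sy) = slex_lt pZ a x a' y -> (sy < sx) = slex_lt pZ a' y a x ->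
  slex_lt prod_plus (prod_pos b a) x (prod_pos b' a') y = slex_lt pW b sx b' sy.
Proof.
move=> E1 E2; rewrite /slex_lt prod_pos_ltE prod_pos_eqE prod_plus_pos E1 E2 /slex_lt.
case: (ltngtP (b : nat) b') => //= _; case: (pW b) => /=.
- by case: (ltngtP (a : nat) a').
- by case: (ltngtP (a : nat) a') => //= <-; case: (pZ a).
Qed.

Definition pair_word (p : {ffun 'I_n -> 'I_mZ} * {ffun 'I_n -> 'I_mW}) :
  {ffun 'I_n -> 'I_(mW * mZ)} :=
  [ffun i => Ordinal (prod_pos_lt (p.2 (std pZ p.1 i)) (p.1 i))].

Lemma std_pair_word p : std prod_plus (pair_word p) = (std pZ p.1 * std pW p.2)%g.
Proof.
apply: std_eq => x y; rewrite !permM std_ltE /word_lt !ffunE /=.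
by apply: slex_prod; rewrite std_ltE.
Qed.

Lemma pair_word_inj : injective pair_word.
Proof.
move=> [w v] [w' v'] /ffunP /= eq_wv.
have {}eq_wv i : (v (std pZ w i) == v' (std pZ w' i) :> nat) && (w i == w' i :> nat).
  by have := eq_wv i; rewrite !ffunE => /(congr1 val) /= /eqP; rewrite prod_pos_eqE.
have eq_w : w = w' by apply/ffunP => i; apply/val_inj/eqP; case/andP: (eq_wv i).
subst w'; congr pair; apply/ffunP => j; apply/val_inj/eqP.
by have /andP[] := eq_wv ((std pZ w)^-1 j)%g; rewrite permKV.
Qed.

Lemma card_std_pair_word (s : 'S_n) :
  #|[set u : {ffun 'I_n -> 'I_(mW * mZ)} | std prod_plus u == s]|
  = #|[set p : {ffun 'I_n -> 'I_mZ} * {ffun 'I_n -> 'I_mW}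
         | (std pZ p.1 * std pW p.2 == s)%g]|.
Proof.
have [h _ hK] : bijective pair_word.
  apply: inj_card_bij pair_word_inj _.
  by rewrite card_prod !card_ffun !card_ord expnMn mulnC.
rewrite -(card_imset _ pair_word_inj); apply: eq_card => u.
by rewrite -[u]hK mem_imset ?inE ?std_pair_word //; apply: pair_word_inj.
Qed.

Lemma Ncount_prod (s : 'S_n) :
  \sum_(pi : 'S_n) \sum_(tau : 'S_n | (tau * pi)%g == s)
     Ncount mZ pZ pi * Ncount mW pW tau
  = Ncount (mW * mZ) prod_plus s.
Proof.
rewrite [RHS]Ncount_std card_std_pair_word card_mul_fibers (reindex_inj invg_inj).
apply: eq_bigr => pi _; rewrite (reindex_inj invg_inj).
apply: eq_big => [tau|tau _]; first by rewrite -invMg eq_invg_sym.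
by rewrite !Ncount_std !invgK.
Qed.

End Product.

(* Omega_left_count and Omega_right_count are, up to conversion, Ncount with
   [parity_plus true] and [parity_plus false]. *)
Definition parity_plus (e : bool) (p : nat) : bool := e (+) odd p.

Lemma prod_plus_parity k e1 e2 :
  prod_plus (2 * k).+1 (parity_plus e1) (parity_plus e2) =1 parity_plus (e1 == e2).
Proof.
move=> p; set d := (2 * k).+1.
have odd_p : odd p = odd (p %/ d) (+) odd (p %% d).
  by rewrite {1}(divn_eq p d) oddD oddM /d /= oddM andbT.
have odd_rev : odd (d - (p %% d).+1) = odd (p %% d).
  by rewrite oddB ?ltn_pmod // /d /= oddM /=; case: odd.
rewrite /prod_plus /parity_plus odd_rev odd_p.
by case: e1 e2 (odd (p %/ d)) (odd (p %% d)) => [] [] [] [].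
Qed.

Lemma eq_Ncount n m (p1 p2 : nat -> bool) (pi : 'S_n) :
  p1 =1 p2 -> Ncount m p1 pi = Ncount m p2 pi.
Proof.
move=> p12; apply: eq_card => a; rewrite !inE.
by do 2 apply: eq_forallb => ?; rewrite p12.
Qed.

Lemma Ncount_parity_prod n e1 e2 (s : 'S_n) k l :
  \sum_(pi : 'S_n) \sum_(tau : 'S_n | (tau * pi)%g == s)
     Ncount (2 * k).+1 (parity_plus e1) pi * Ncount (2 * l).+1 (parity_plus e2) tau
  = Ncount (2 * (2 * k * l + k + l)).+1 (parity_plus (e1 == e2)) s.
Proof.
rewrite Ncount_prod (eq_Ncount _ _ (prod_plus_parity k e1 e2)).
by congr Ncount; nia.
Qed.

Local Open Scope ring_scope.

Lemma poly_eq0_inj_roots (R : idomainType) (p : {poly R}) (c : nat -> R) :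
  injective c -> (forall k, p.[c k] = 0) -> p = 0.
Proof.
move=> c_inj pc0; apply: (@roots_geq_poly_eq0 _ _ [seq c k | k <- iota 0 (size p)]).
- by apply/allP => _ /mapP[k _ ->]; apply/rootP.
- by rewrite map_inj_uniq ?iota_uniq.
- by rewrite size_map size_iota.
Qed.

Definition eval2 (R : comNzRingType) (a b : R) : {rmorphism {poly {poly R}} -> R} :=
  horner_eval a \o horner_eval b%:P.

Lemma eval2E (R : comNzRingType) (a b : R) F : eval2 a b F = F.[b%:P].[a].
Proof. by rewrite /= !horner_evalE. Qed.

Lemma poly2_eq0_inj_roots (R : idomainType) (F : {poly {poly R}}) (c : nat -> R) :
  injective c -> (forall k l, eval2 (c k) (c l) F = 0) -> F = 0.
Proof.
move=> c_inj Fc0; apply: (@poly_eq0_inj_roots _ F (fun l => (c l)%:P)).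
  by move=> k l /polyC_inj /c_inj.
by move=> l; apply: (poly_eq0_inj_roots c_inj) => k; rewrite -eval2E.
Qed.

Section Evaluation.
Variables a b : rat.

Lemma eval2_const c : eval2 a b c%:P%:P = c.
Proof. by rewrite eval2E !hornerC. Qed.

Lemma eval2_varX : eval2 a b varX = a.
Proof. by rewrite eval2E hornerC hornerX. Qed.

Lemma eval2_varY : eval2 a b varY = b.
Proof. by rewrite eval2E hornerX hornerC. Qed.

Lemma eval2_rho n (P : 'S_n -> {poly rat}) u pi :
  eval2 a b (rho P u pi) = (P pi).[(eval2 a b u - 1) / 2%:R].
Proof.
rewrite /rho /peval -horner_map -map_poly_comp map_poly_id => [|c _]; last first.
  exact: eval2_const.
by rewrite /half_shift rmorphM rmorphB rmorph1 eval2_const.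
Qed.

End Evaluation.

Lemma odd_half k : (((2 * k).+1)%:R - 1) / 2%:R = k%:R :> rat.
Proof. by rewrite -addn1 natrD addrK natrM mulrC mulKf. Qed.

Lemma galg_mul_rho n (P Q R : 'S_n -> {poly rat}) (NP NQ NR : 'S_n -> nat -> nat) :
  (forall pi k, (0 < k)%N -> (P pi).[k%:R] = (NP pi k)%:R) ->
  (forall pi k, (0 < k)%N -> (Q pi).[k%:R] = (NQ pi k)%:R) ->
  (forall pi k, (0 < k)%N -> (R pi).[k%:R] = (NR pi k)%:R) ->
  (forall s k l, \sum_(pi : 'S_n) \sum_(tau : 'S_n | (tau * pi)%g == s)
                   NP pi k * NQ tau l = NR s (2 * k * l + k + l))%N ->
  galg_mul (rho P varX) (rho Q varY) =1 rho R (varX * varY).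
Proof.
move=> PE QE RE NPQR s; apply/eqP; rewrite -subr_eq0; apply/eqP.
pose odd_nat k : rat := ((2 * k.+1).+1)%:R.
apply: (@poly2_eq0_inj_roots _ _ odd_nat) => [k l /eqP|k l].
  by rewrite Num.Theory.eqr_nat => /eqP; lia.
rewrite rmorphB /galg_mul rmorph_sum eval2_rho rmorphM eval2_varX eval2_varY -natrM.
rewrite (_ : _ * _ = (2 * (2 * k.+1 * l.+1 + k.+1 + l.+1)).+1)%N; last by nia.
rewrite odd_half RE // -NPQR natr_sum; apply/eqP; rewrite subr_eq0; apply/eqP.
apply: eq_bigr => pi _; rewrite rmorph_sum natr_sum; apply: eq_bigr => tau _.
by rewrite rmorphM !eval2_rho eval2_varX eval2_varY !odd_half PE // QE // natrM.
Qed.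

Theorem theorem3p3 (n : nat) (hn : (1 <= n)%N)
  (Oml Omr : 'S_n -> {poly rat})
  (hOml : forall (pi : 'S_n) (k : nat), (0 < k)%N ->
            (Oml pi).[k%:R] = (Omega_left_count pi k)%:R)
  (hOmr : forall (pi : 'S_n) (k : nat), (0 < k)%N ->
            (Omr pi).[k%:R] = (Omega_right_count pi k)%:R) :
  [/\ galg_mul (rho Oml varX) (rho Oml varY) =1 rho Oml (varX * varY),
      galg_mul (rho Omr varX) (rho Omr varY) =1 rho Oml (varX * varY),
      galg_mul (rho Oml varX) (rho Omr varY) =1 rho Omr (varX * varY) &
      galg_mul (rho Omr varX) (rho Oml varY) =1 rho Omr (varX * varY)].
Proof.
split.
- exact: (galg_mul_rho hOml hOml hOml (Ncount_parity_prod true true)).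
- exact: (galg_mul_rho hOmr hOmr hOml (Ncount_parity_prod false false)).
- exact: (galg_mul_rho hOml hOmr hOmr (Ncount_parity_prod true false)).
- exact: (galg_mul_rho hOmr hOml hOmr (Ncount_parity_prod false true)).
Qed.
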